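(* Let $(M,\Sigma)$ be a measurable space, $r\ge1$, and $\mu_1,\dots,\mu_r$ non-atomic countably additive finite measures on $\Sigma$. Let $(H_k)_{k\ge1}$ be measurable sets and $(h_k)_{k\ge1}$ indices in $\{1,\dots,r\}$ such that for every $k$: $H_k\subseteq M\setminus\bigcup_{i=1}^{k-1}H_i$, $H_k$ has a gentleman's solution (a partition $H_k=F_1\sqcup\dots\sqcup F_r$ with $\mu_i(F_i)\le\mu_i(F_j)$ for all $i,j$), and $\mu_{h_k}(H_k)\ge 2^{-(r-1)}\mu_{h_k}\bigl(M\setminus\bigcup_{i=1}^{k-1}H_i\bigr)$. Let $\ell\in\{1,\dots,r\}$ be an index with $h_k=\ell$ for infinitely many $k$, and let $M_\infty=M\setminus\bigsqcup_{i=1}^\infty H_i$. Then $\mu_\ell(M_\infty)=0$. *)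

From HB Require Import structures.
From mathcomp Require Import all_boot all_order all_algebra.
From mathcomp Require Import all_classical all_reals all_analysis.
Set Implicit Arguments. Unset Strict Implicit. Unset Printing Implicit Defensive.
Import Order.TTheory GRing.Theory Num.Theory.
Local Open Scope classical_set_scope.
Local Open Scope ring_scope.

Definition nonatomic d (T : measurableType d) (R : realType)
  (mu : set T -> \bar R) : Prop :=
  forall A, measurable A -> (0 < mu A)%E ->
    exists B, [/\ measurable B, B `<=` A & (0 < mu B < mu A)%E].

Definition gentleman_solution d (T : measurableType d) (R : realType) (r : nat)
  (mu : 'I_r -> set T -> \bar R) (H : set T) : Prop :=
  exists F : 'I_r -> set T,
    [/\ forall i, measurable (F i),
        H = \big[setU/set0]_(i < r) F i,
        forall i j, i != j -> F i `&` F j = set0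
      & forall i j, (mu i (F i) <= mu i (F j))%E].

(** The sets [H k] are pairwise disjoint, and whenever [h k = l] the set [H k]
    carries [mu_l]-mass at least [2^-(r-1) mu_l(M_oo)], because [M_oo] is
    contained in the part of [M] not yet covered before step [k].  This
    happens for infinitely many [k], so if [mu_l(M_oo)] were positive the
    finite unions of the [H k] would have unbounded [mu_l]-measure,
    contradicting the finiteness of [mu_l].  Non-atomicity and the
    gentleman's solutions only matter for constructing such [H k]. *)

From HB Require Import structures.
From mathcomp Require Import all_boot all_order all_algebra.
From mathcomp Require Import all_classical all_reals all_analysis.
Import Order.TTheory GRing.Theory Num.Theory.
Local Open Scope classical_set_scope.
Local Open Scope ring_scope.

Lemma io_ge_sum_ge_natmul (R : realDomainType) (u : (\bar R)^nat) (b : R) :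
  (forall k, (0 <= u k)%E) ->
  (forall N, exists2 k, (N <= k)%N & (b%:E <= u k)%E) ->
  forall m, exists n, ((m%:R * b)%:E <= \sum_(i < n) u i)%E.
Proof.
move=> u_ge0 u_io; elim=> [|m [n IHn]].
  by exists 0%N; rewrite mul0r big_ord0.
have [k nk bk] := u_io n; exists k.+1.
rewrite big_ord_recr /= -natr1 mulrDl mul1r EFinD leeD //.
apply: (le_trans IHn).
exact: (lee_sum_nneg_ord u xpredT (fun k _ => u_ge0 k) n k nk).
Qed.

Section disjoint_sets_of_finite_measure.
Context {d : measure_display} {T : measurableType d} {R : realType}.
Variable mu : {finite_measure set T -> \bar R}.
Variable F : nat -> set T.
Hypotheses (F_meas : forall k, measurable (F k)) (F_triv : trivIset setT F).

Lemma sum_measure_trivIset_le n : (\sum_(i < n) mu (F i) <= mu setT)%E.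
Proof.
rewrite -measure_bigsetU //; apply: le_measure; rewrite ?inE //.
exact: bigsetU_measurable.
Qed.

Lemma trivIset_measure_io_ge (b : R) :
  (forall N, exists2 k, (N <= k)%N & (b%:E <= mu (F k))%E) -> b <= 0.
Proof.
move=> mu_io; rewrite leNgt; apply/negP => b_gt0.
have muT_fin : mu setT \is a fin_num by exact: fin_num_measure.
have muT_ge0 : 0 <= fine (mu setT) by rewrite fine_ge0 // measure_ge0.
have := archi_boundP (divr_ge0 muT_ge0 (ltW b_gt0)).
set m := Num.Def.archi_bound _ => muT_lt.
have [n mb_le] := io_ge_sum_ge_natmul _ _ _ (fun k => measure_ge0 mu (F k)) mu_io m.
have := le_trans mb_le (sum_measure_trivIset_le n).
by rewrite -[mu setT]fineK // lee_fin -ler_pdivlMr // leNgt muT_lt.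
Qed.

End disjoint_sets_of_finite_measure.

Theorem corollary4 (d : measure_display) (T : measurableType d) (R : realType)
  (r : nat) (hr : (1 <= r)%N)
  (mu : 'I_r -> {finite_measure set T -> \bar R})
  (mu_na : forall i, nonatomic (mu i))
  (H : nat -> set T) (h : nat -> 'I_r)
  (H_meas : forall k, measurable (H k))
  (H_sub : forall k, H k `<=` ~` (\big[setU/set0]_(i < k) H i))
  (H_gent : forall k, gentleman_solution (fun i => mu i) (H k))
  (H_big : forall k,
     ((2 ^- r.-1)%:E * mu (h k) (~` (\big[setU/set0]_(i < k) H i))
        <= mu (h k) (H k))%E)
  (l : 'I_r) (hl : forall N, exists2 k, (N <= k)%N & h k = l) :
  mu l (~` (\bigcup_k H k)) = 0%E.
Proof.
set Moo := ~` (\bigcup_k H k).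
have Moo_meas : measurable Moo by exact/measurableC/bigcupT_measurable.
have Moo_fin : mu l Moo \is a fin_num by exact: fin_num_measure.
have H_triv : trivIset setT H by apply: subsetC_trivIset => n; exact: H_sub.
set c : R := 2 ^- r.-1.
have c_gt0 : 0 < c by rewrite invr_gt0 exprn_gt0.
have H_ge k : h k = l -> ((c * fine (mu l Moo))%:E <= mu l (H k))%E.
  move=> hk; rewrite EFinM fineK // -hk; apply: (le_trans _ (H_big k)).
  apply: lee_wpmul2l; first by rewrite lee_fin ltW.
  apply: le_measure; rewrite ?inE //; first exact/measurableC/bigsetU_measurable.
  exact/subsetC/bigsetU_bigcup.
have : c * fine (mu l Moo) <= 0.
  apply: (trivIset_measure_io_ge (mu l) H H_meas H_triv) => N.
  by have [k Nk hk] := hl N; exists k => //; exact: H_ge.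
rewrite pmulr_rle0 // => Moo_le0.
by apply/eqP; rewrite eq_le measure_ge0 andbT -[mu l Moo]fineK // lee_fin.
Qed.
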